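(* For integers $r\geq1$, $p\geq2$, $k_1\geq2$ and $k_2,\ldots,k_r\geq1$, \[ \lim_{m\to\infty}\zeta^{\star}(k_1,\ldots,k_r,\{p\}^m)=\zeta^{\star}(k_1,\ldots,k_{r-1})+\sum_{n_1\geq\cdots\geq n_r\geq2}\frac{1}{n_1^{k_1}\cdots n_r^{k_r}}\prod_{l=2}^{n_r}\frac{l^p}{l^p-1}. \]
   Context: $\zeta^{\star}(k_1,\ldots,k_r)=\sum_{n_1\geq\cdots\geq n_r\geq 1}\frac{1}{n_1^{k_1}\cdots n_r^{k_r}}$ for $k_1\geq2$, $k_2,\ldots,k_r\geq1$; $\{p\}^m$ denotes $m$ consecutive arguments equal to $p$. For $r=1$, $\zeta^{\star}(k_1,\ldots,k_{r-1})$ is the empty value, interpreted as $1$. *)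

From Stdlib Require Import Reals List.
From Coquelicot Require Import Coquelicot.
Open Scope R_scope.

(* Truncated nested sum: for ks = [k1; ...; kr],
   nsum ks lo w N = sum_{N >= n1 >= ... >= nr >= lo} w(nr) / (n1^k1 ... nr^kr),
   and nsum [] lo w N = w N (so that with w = 1 the empty sum is 1). *)
Fixpoint nsum (ks : list nat) (lo : nat) (w : nat -> R) (N : nat) : R :=
  match ks with
  | nil => w N
  | k :: ks' => sum_n_m (fun n => / (INR n ^ k) * nsum ks' lo w n) lo N
  end.

Definition zeta_star (ks : list nat) : R :=
  real (Lim_seq (fun N => nsum ks 1 (fun _ => 1) N)).

(* prod_{l=2}^{n} l^p / (l^p - 1)  (empty product = 1 for n <= 1) *)
Fixpoint wprod (p n : nat) : R :=
  match n with
  | O => 1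
  | S n' => match n' with
            | O => 1
            | _ => wprod p n' * (INR n ^ p / (INR n ^ p - 1))
            end
  end.

Definition rhs_sum (ks : list nat) (p : nat) : R :=
  real (Lim_seq (fun N => nsum ks 2 (wprod p) N)).

(* The inner sum over n_{r+1} >= ... >= n_{r+m} >= 1 with exponent p, for a fixed top index n, increases in
   m to the fixed point W(n) = prod_{l=2}^n l^p/(l^p - 1) of f |-> (n |-> sum_{j<=n} f(j)/j^p).  Since W <= 2
   and the truncated zeta-star sums with k1 >= 2 are uniformly bounded, the limits in m and in the truncation
   can be exchanged by monotone convergence; finally the terms with n_r = 1 carry the weight W(1) = 1 and give
   zeta-star(k1, ..., k_{r-1}), while the terms with n_r >= 2 give the weighted sum. *)
From Stdlib Require Import Reals List Lia Lra Arith.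
From Coquelicot Require Import Coquelicot.
Open Scope R_scope.

Lemma sum_n_m_empty (f : nat -> R) lo N : (N < lo)%nat -> sum_n_m f lo N = 0.
Proof. intros H. rewrite sum_n_m_zero by exact H. reflexivity. Qed.

Lemma sum_n_m_succ_r (f : nat -> R) lo N :
  (lo <= S N)%nat -> sum_n_m f lo (S N) = sum_n_m f lo N + f (S N).
Proof. intros H. rewrite sum_n_Sm by exact H. reflexivity. Qed.

Lemma sum_n_m_succ_l (f : nat -> R) lo N :
  (lo <= N)%nat -> sum_n_m f lo N = f lo + sum_n_m f (S lo) N.
Proof. intros H. rewrite sum_Sn_m by exact H. reflexivity. Qed.

Lemma sum_n_m_le_loc (f g : nat -> R) lo N :
  (forall n, (lo <= n <= N)%nat -> f n <= g n) -> sum_n_m f lo N <= sum_n_m g lo N.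
Proof.
  intros H. induction N as [|N IH].
  - destruct lo.
    + rewrite !sum_n_n. apply H; lia.
    + rewrite !sum_n_m_empty by lia. lra.
  - destruct (le_lt_dec lo (S N)).
    + rewrite !sum_n_m_succ_r by lia.
      apply Rplus_le_compat; [apply IH; intros; apply H|apply H]; lia.
    + rewrite !sum_n_m_empty by lia. lra.
Qed.

Lemma sum_n_m_nonneg_loc (f : nat -> R) lo N :
  (forall n, (lo <= n <= N)%nat -> 0 <= f n) -> 0 <= sum_n_m f lo N.
Proof.
  intros H.
  assert (E : sum_n_m (fun _ => 0) lo N = 0) by exact (sum_n_m_const_zero (G := R_AbelianMonoid) lo N).
  rewrite <- E. now apply sum_n_m_le_loc.
Qed.

Lemma is_lim_seq_sum_n_m_loc (u : nat -> nat -> R) (l : nat -> R) lo N :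
  (forall n, (lo <= n <= N)%nat -> is_lim_seq (fun m => u m n) (l n)) ->
  is_lim_seq (fun m => sum_n_m (u m) lo N) (sum_n_m l lo N).
Proof.
  intros H. induction N as [|N IH].
  - destruct lo.
    + rewrite sum_n_n. apply (is_lim_seq_ext (fun m => u m 0%nat)).
      { intros m. now rewrite sum_n_n. }
      apply H; lia.
    + rewrite sum_n_m_empty by lia. apply (is_lim_seq_ext (fun _ => 0)).
      { intros m. now rewrite sum_n_m_empty by lia. }
      apply is_lim_seq_const.
  - destruct (le_lt_dec lo (S N)).
    + rewrite sum_n_m_succ_r by lia.
      apply (is_lim_seq_ext (fun m => sum_n_m (u m) lo N + u m (S N))).
      { intros m. now rewrite sum_n_m_succ_r by lia. }
      apply is_lim_seq_plus'; [apply IH; intros; apply H|apply H]; lia.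
    + rewrite sum_n_m_empty by lia. apply (is_lim_seq_ext (fun _ => 0)).
      { intros m. now rewrite sum_n_m_empty by lia. }
      apply is_lim_seq_const.
Qed.

Lemma is_lim_seq_real_Lim_seq_incr (u : nat -> R) (M : R) :
  (forall n, u n <= u (S n)) -> (forall n, u n <= M) -> is_lim_seq u (real (Lim_seq u)).
Proof.
  intros Hincr Hbound. destruct (ex_finite_lim_seq_incr u M Hincr Hbound) as [l Hl].
  now rewrite (is_lim_seq_unique _ _ Hl).
Qed.

Lemma is_lim_seq_Lim_seq_incr2 (a : nat -> nat -> R) (L : nat -> R) (Z : R) :
  (forall m N, a m N <= a (S m) N) -> (forall m N, a m N <= a m (S N)) ->
  (forall N, is_lim_seq (fun m => a m N) (L N)) -> is_lim_seq L Z ->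
  is_lim_seq (fun m => real (Lim_seq (a m))) Z.
Proof.
  intros Hm HN HaL HL.
  assert (HaL_le : forall m N, a m N <= L N).
  { intros m N. exact (is_lim_seq_incr_compare (fun m => a m N) (L N) (HaL N) (fun m => Hm m N) m). }
  assert (HL_incr : forall N, L N <= L (S N)).
  { intros N. exact (is_lim_seq_le _ _ (L N) (L (S N)) (fun m => HN m N) (HaL N) (HaL (S N))). }
  assert (HLZ : forall N, L N <= Z) by exact (is_lim_seq_incr_compare L Z HL HL_incr).
  assert (Ha_lim : forall m, is_lim_seq (a m) (real (Lim_seq (a m)))).
  { intros m. apply (is_lim_seq_real_Lim_seq_incr _ Z (HN m)).
    intros N. specialize (HaL_le m N). specialize (HLZ N). lra. }
  assert (Ha_le : forall m N, a m N <= real (Lim_seq (a m))).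
  { intros m. exact (is_lim_seq_incr_compare (a m) _ (Ha_lim m) (HN m)). }
  assert (Hz_le : forall m, real (Lim_seq (a m)) <= Z).
  { intros m. exact (is_lim_seq_le (a m) (fun _ => Z) _ Z
                       (fun N => Rle_trans _ _ _ (HaL_le m N) (HLZ N)) (Ha_lim m) (is_lim_seq_const Z)). }
  apply is_lim_seq_spec. intros eps.
  destruct (proj2 (is_lim_seq_spec _ _) HL (pos_div_2 eps)) as [N0 HN0].
  specialize (HN0 N0 (le_n _)).
  destruct (proj2 (is_lim_seq_spec _ _) (HaL N0) (pos_div_2 eps)) as [m0 Hm0].
  exists m0. intros m Hmm0. specialize (Hm0 m Hmm0). simpl in HN0, Hm0.
  specialize (Ha_le m N0). specialize (Hz_le m).
  apply Rabs_def2 in HN0. apply Rabs_def2 in Hm0.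
  apply Rabs_def1; lra.
Qed.

Lemma inv_pow_nonneg n k : 0 <= / (INR n ^ k).
Proof.
  destruct (Req_dec (INR n ^ k) 0) as [E|E].
  - rewrite E, Rinv_0. lra.
  - apply Rlt_le, Rinv_0_lt_compat. pose proof (pow_le _ k (pos_INR n)). lra.
Qed.

Lemma INR_ge1 n : (1 <= n)%nat -> 1 <= INR n.
Proof. intros H. exact (le_INR 1 n H). Qed.

Lemma inv_pow_le_inv_pow n a b : (1 <= n)%nat -> (b <= a)%nat -> / (INR n ^ a) <= / (INR n ^ b).
Proof.
  intros Hn Hab. pose proof (INR_ge1 n Hn).
  apply Rinv_le_contravar; [apply pow_lt; lra|apply Rle_pow; auto].
Qed.

Lemma inv_sq_le_telescope M : 1 <= M -> / (M ^ 2) <= 2 / M - 2 / (M + 1).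
Proof.
  intros HM.
  assert (E : 2 / M - 2 / (M + 1) - / (M ^ 2) = (M - 1) / (M ^ 2 * (M + 1))) by (field; lra).
  assert (0 <= (M - 1) / (M ^ 2 * (M + 1))).
  { apply Rmult_le_pos; [lra|apply Rlt_le, Rinv_0_lt_compat; simpl; nra]. }
  lra.
Qed.

Lemma sum_inv_sq_le N : sum_n_m (fun n => / (INR n ^ 2)) 1 N + 2 / INR (S N) <= 2.
Proof.
  induction N as [|N IH].
  - rewrite sum_n_m_empty by lia. simpl. lra.
  - rewrite sum_n_m_succ_r by lia.
    pose proof (inv_sq_le_telescope (INR (S N)) (INR_ge1 (S N) ltac:(lia))).
    rewrite (S_INR (S N)). lra.
Qed.

(* The telescoping bound [sum_{n=j}^N 1/n^2 <= 2/j - 2/(N+1)], applied to the inner sum and kept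
   in a form that can be proved by induction on N without exchanging the order of summation. *)
Lemma sum_inv_sq_nested_le k (a : nat -> R) N : (1 <= k)%nat -> (forall n, 0 <= a n) ->
  sum_n_m (fun n => / (INR n ^ 2) * sum_n_m (fun j => / (INR j ^ k) * a j) 1 n) 1 N
  + 2 * sum_n_m (fun j => / (INR j ^ k) * a j) 1 N / INR (S N)
  <= 2 * sum_n_m (fun n => / (INR n ^ 2) * a n) 1 N.
Proof.
  intros Hk Ha. induction N as [|N IH].
  - rewrite !sum_n_m_empty by lia. unfold Rdiv. lra.
  - rewrite !(sum_n_m_succ_r _ 1 N) by lia.
    set (T := sum_n_m (fun j => / (INR j ^ k) * a j) 1 N) in *.
    set (M := INR (S N)) in *.
    set (t := / (M ^ k) * a (S N)).
    assert (HM : 1 <= M) by (apply INR_ge1; lia).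
    assert (HT : 0 <= T).
    { apply sum_n_m_nonneg_loc. intros. apply Rmult_le_pos; [apply inv_pow_nonneg|apply Ha]. }
    assert (Ht : 0 <= t) by (apply Rmult_le_pos; [apply inv_pow_nonneg|apply Ha]).
    assert (Ht_a : 2 * t / M <= 2 * (/ (M ^ 2) * a (S N))).
    { assert (Hpow : / (M ^ k) <= / M).
      { rewrite <- (pow_1 M) at 2. apply inv_pow_le_inv_pow; lia. }
      assert (E : 2 * (/ (M ^ 2) * a (S N)) = 2 * (/ M * a (S N)) / M) by (field; lra).
      rewrite E. unfold t, Rdiv. apply Rmult_le_compat_r; [apply Rlt_le, Rinv_0_lt_compat; lra|].
      apply Rmult_le_compat_l; [lra|]. apply Rmult_le_compat_r; [apply Ha|exact Hpow]. }
    assert (Hstep : (T + t) * (/ (M ^ 2) + 2 / (M + 1)) <= (T + t) * (2 / M)).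
    { apply Rmult_le_compat_l; [lra|]. pose proof (inv_sq_le_telescope M HM). lra. }
    rewrite (S_INR (S N)). fold M.
    assert (E : 2 * (T + t) / M = 2 * T / M + 2 * t / M) by (field; lra).
    unfold Rdiv in *. nra.
Qed.

Lemma nsum_app K l lo w N : nsum (K ++ l) lo w N = nsum K lo (nsum l lo w) N.
Proof.
  revert N. induction K as [|k K IH]; intros N; simpl; [reflexivity|].
  apply sum_n_m_ext. intros n. now rewrite IH.
Qed.

Lemma nsum_nonneg K lo w N : (forall n, 0 <= w n) -> 0 <= nsum K lo w N.
Proof.
  intros Hw. revert N. induction K as [|k K IH]; intros N; simpl; [apply Hw|].
  apply sum_n_m_nonneg_loc. intros n _. apply Rmult_le_pos; [apply inv_pow_nonneg|apply IH].
Qed.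

Lemma nsum_le_nsum K lo w1 w2 N : K <> nil -> (forall n, (lo <= n)%nat -> w1 n <= w2 n) ->
  nsum K lo w1 N <= nsum K lo w2 N.
Proof.
  intros HK Hw. destruct K as [|k K]; [congruence|]. revert k N HK.
  induction K as [|k' K IH]; intros k N _; simpl; apply sum_n_m_le_loc; intros n Hn;
    apply Rmult_le_compat_l; try apply inv_pow_nonneg.
  - apply Hw. lia.
  - apply (IH k' n). congruence.
Qed.

Lemma nsum_le_succ K lo w N : K <> nil -> (forall n, 0 <= w n) ->
  nsum K lo w N <= nsum K lo w (S N).
Proof.
  intros HK Hw. destruct K as [|k K]; [congruence|]. simpl.
  destruct (le_lt_dec lo (S N)).
  - rewrite (sum_n_m_succ_r _ lo N) by lia.
    assert (0 <= / (INR (S N) ^ k) * nsum K lo w (S N)).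
    { apply Rmult_le_pos; [apply inv_pow_nonneg|now apply nsum_nonneg]. }
    lra.
  - rewrite !sum_n_m_empty by lia. lra.
Qed.

Lemma nsum_scal K lo w c N : nsum K lo (fun n => c * w n) N = c * nsum K lo w N.
Proof.
  revert N. induction K as [|k K IH]; intros N; simpl; [reflexivity|].
  transitivity (sum_n_m (fun n => c * (/ INR n ^ k * nsum K lo w n)) lo N).
  - apply sum_n_m_ext. intros n. rewrite IH, <- !Rmult_assoc, (Rmult_comm c). reflexivity.
  - exact (sum_n_m_mult_l (K := R_Ring) c _ lo N).
Qed.

Lemma is_lim_seq_nsum K lo (u : nat -> nat -> R) (w : nat -> R) N : K <> nil ->
  (forall n, (lo <= n)%nat -> is_lim_seq (fun m => u m n) (w n)) ->
  is_lim_seq (fun m => nsum K lo (u m) N) (nsum K lo w N).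
Proof.
  intros HK Hw. destruct K as [|k K]; [congruence|]. revert k N HK.
  induction K as [|k' K IH]; intros k N _; simpl;
    apply is_lim_seq_sum_n_m_loc; intros n Hn;
    apply is_lim_seq_mult'; try apply is_lim_seq_const.
  - apply Hw. lia.
  - apply (IH k' n). congruence.
Qed.

Lemma nsum_two_one_le ks N : List.Forall (fun k => (1 <= k)%nat) ks ->
  nsum (2%nat :: ks) 1 (fun _ => 1) N <= 2 ^ S (length ks).
Proof.
  intros Hks. revert N. induction Hks as [|k ks Hk Hks IH]; intros N.
  - pose proof (sum_inv_sq_le N).
    assert (0 <= 2 / INR (S N)).
    { apply Rmult_le_pos; [lra|apply Rlt_le, Rinv_0_lt_compat, lt_0_INR; lia]. }
    simpl. rewrite (sum_n_m_ext _ (fun n => / (INR n ^ 2))) by (intros; apply Rmult_1_r). lra.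
  - pose proof (sum_inv_sq_nested_le k (nsum ks 1 (fun _ => 1)) N Hk
                  (fun n => nsum_nonneg ks 1 (fun _ => 1) n (fun _ => Rle_0_1))) as Hnest.
    assert (0 <= 2 * nsum (k :: ks) 1 (fun _ => 1) N / INR (S N)).
    { apply Rmult_le_pos; [apply Rmult_le_pos; [lra|apply nsum_nonneg; intros; apply Rle_0_1]|].
      apply Rlt_le, Rinv_0_lt_compat, lt_0_INR; lia. }
    specialize (IH N). simpl in *. lra.
Qed.

Lemma nsum_le_of_bounded_weight k1 ks w c N :
  (2 <= k1)%nat -> List.Forall (fun k => (1 <= k)%nat) ks -> (forall n, 0 <= w n <= c) ->
  nsum (k1 :: ks) 1 w N <= c * 2 ^ S (length ks).
Proof.
  intros Hk1 Hks Hw.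
  assert (Hc : 0 <= c) by (specialize (Hw 0%nat); lra).
  apply Rle_trans with (nsum (k1 :: ks) 1 (fun _ => c * 1) N).
  { apply nsum_le_nsum; [congruence|]. intros n _. specialize (Hw n). lra. }
  rewrite (nsum_scal _ _ (fun _ => 1)). apply Rmult_le_compat_l; [exact Hc|].
  eapply Rle_trans; [|exact (nsum_two_one_le ks N Hks)].
  cbn [nsum]. apply sum_n_m_le_loc. intros n Hn.
  apply Rmult_le_compat_r; [apply nsum_nonneg; intros; apply Rle_0_1|].
  apply inv_pow_le_inv_pow; lia.
Qed.

(* Separates the terms with n_r = 1, where the last factor is 1/1^{k_r} = 1. *)
Lemma nsum_split_last K w N : K <> nil -> (1 <= N)%nat ->
  nsum K 1 w N = nsum (removelast K) 1 (fun _ => w 1%nat) N + nsum K 2 w N.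
Proof.
  revert N. induction K as [|k K IH]; intros N HK HN; [congruence|].
  destruct K as [|k' K].
  - simpl. rewrite (sum_n_m_succ_l _ 1 N) by lia. simpl. rewrite pow1, Rinv_1. ring.
  - change (removelast (k :: k' :: K)) with (k :: removelast (k' :: K)).
    remember (k' :: K) as K' eqn:EK.
    assert (HK'0 : nsum K' 2 w 1 = 0) by (subst K'; apply sum_n_m_empty; lia).
    cbn [nsum].
    rewrite (sum_n_m_ext_loc _ (fun n => / (INR n ^ k) * nsum (removelast K') 1 (fun _ => w 1%nat) n
                                        + / (INR n ^ k) * nsum K' 2 w n)).
    2:{ intros n Hn. rewrite IH by (congruence || lia). apply Rmult_plus_distr_l. }
    rewrite (sum_n_m_plus (G := R_AbelianMonoid)). apply (f_equal2 Rplus); [reflexivity|].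
    rewrite (sum_n_m_succ_l _ 1 N), HK'0 by lia. rewrite Rmult_0_r, Rplus_0_l. reflexivity.
Qed.

Lemma wprod_SS p n :
  wprod p (S (S n)) = wprod p (S n) * (INR (S (S n)) ^ p / (INR (S (S n)) ^ p - 1)).
Proof. reflexivity. Qed.

Lemma pow_INR_SS_gt1 p n : (1 <= p)%nat -> 1 < INR (S (S n)) ^ p.
Proof.
  intros Hp. assert (H2 : 2 <= INR (S (S n))) by (rewrite !S_INR; pose proof (pos_INR n); lra).
  apply Rlt_le_trans with (INR (S (S n)) ^ 1); [rewrite pow_1; lra|apply Rle_pow; [lra|exact Hp]].
Qed.

Lemma wprod_ge1 p n : (1 <= p)%nat -> 1 <= wprod p n.
Proof.
  intros Hp. induction n as [|[|n] IH]; try (simpl; lra).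
  rewrite wprod_SS. pose proof (pow_INR_SS_gt1 p n Hp).
  set (y := INR (S (S n)) ^ p) in *.
  assert (E : y / (y - 1) = 1 + / (y - 1)) by (field; lra).
  assert (0 < / (y - 1)) by (apply Rinv_0_lt_compat; lra).
  rewrite E. nra.
Qed.

(* Since [p >= 2], each factor is at most [l^2/(l^2-1)], and that product telescopes to [2n/(n+1)]. *)
Lemma wprod_le p n : (2 <= p)%nat -> (1 <= n)%nat -> wprod p n <= 2 * INR n / INR (S n).
Proof.
  intros Hp. induction n as [|[|n] IH]; intros Hn; [lia|simpl; lra|].
  rewrite wprod_SS. specialize (IH ltac:(lia)).
  pose proof (pow_INR_SS_gt1 p n ltac:(lia)). pose proof (wprod_ge1 p (S n) ltac:(lia)).
  set (m := INR (S n)) in *.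
  assert (Hm : 1 <= m) by (apply INR_ge1; lia).
  assert (E1 : INR (S (S n)) = m + 1) by (unfold m; rewrite S_INR; reflexivity).
  assert (E2 : INR (S (S (S n))) = m + 2) by (rewrite S_INR, E1; ring).
  rewrite E2. rewrite E1 in H, IH |- *.
  set (y := (m + 1) ^ p) in *.
  set (Y := (m + 1) ^ 2).
  assert (Hy : Y <= y) by (apply Rle_pow; [lra|lia]).
  assert (HY : Y = m * (m + 2) + 1) by (unfold Y; ring).
  assert (Hq : y / (y - 1) <= Y / (Y - 1)).
  { assert (E : Y / (Y - 1) - y / (y - 1) = (y - Y) / ((y - 1) * (Y - 1))) by (field; nra).
    assert (0 <= (y - Y) / ((y - 1) * (Y - 1))).
    { apply Rmult_le_pos; [lra|apply Rlt_le, Rinv_0_lt_compat; nra]. }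
    lra. }
  assert (Hq0 : 0 <= y / (y - 1)) by (apply Rmult_le_pos; [lra|apply Rlt_le, Rinv_0_lt_compat; lra]).
  assert (E : 2 * m / (m + 1) * (Y / (Y - 1)) = 2 * (m + 1) / (m + 2)) by (rewrite HY; field; nra).
  rewrite <- E. apply Rmult_le_compat; lra.
Qed.

Lemma wprod_le2 p n : (2 <= p)%nat -> wprod p n <= 2.
Proof.
  intros Hp. destruct n as [|n]; [simpl; lra|].
  pose proof (wprod_le p (S n) Hp ltac:(lia)).
  assert (2 * INR (S n) / INR (S (S n)) <= 2).
  { rewrite (S_INR (S n)). pose proof (pos_INR (S n)).
    apply Rmult_le_reg_r with (INR (S n) + 1); [lra|].
    unfold Rdiv. rewrite Rmult_assoc, Rinv_l by lra. lra. }
  lra.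
Qed.

Lemma wprod_succ p n : (1 <= p)%nat -> (1 <= n)%nat ->
  wprod p (S n) = wprod p n + / (INR (S n) ^ p) * wprod p (S n).
Proof.
  intros Hp Hn. destruct n as [|n]; [lia|].
  rewrite wprod_SS. pose proof (pow_INR_SS_gt1 p n Hp).
  field. lra.
Qed.

Lemma wprod_fixpoint p n : (1 <= p)%nat -> (1 <= n)%nat ->
  sum_n_m (fun j => / (INR j ^ p) * wprod p j) 1 n = wprod p n.
Proof.
  intros Hp. induction n as [|[|n] IH]; intros Hn; [lia| |].
  - rewrite sum_n_n. simpl. rewrite pow1, Rinv_1. ring.
  - rewrite sum_n_m_succ_r, IH by lia. symmetry. apply wprod_succ; lia.
Qed.

Definition zrep (p m n : nat) : R := nsum (repeat p m) 1 (fun _ => 1) n.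

Lemma zrep_succ p m n : zrep p (S m) n = sum_n_m (fun j => / (INR j ^ p) * zrep p m j) 1 n.
Proof. reflexivity. Qed.

Lemma zrep_nonneg p m n : 0 <= zrep p m n.
Proof. apply nsum_nonneg. intros. apply Rle_0_1. Qed.

Lemma zrep_one p m : zrep p m 1 = 1.
Proof.
  induction m as [|m IH]; [reflexivity|].
  rewrite zrep_succ, sum_n_n, IH. simpl. rewrite pow1, Rinv_1. ring.
Qed.

Lemma zrep_le_wprod p m n : (1 <= p)%nat -> zrep p m n <= wprod p n.
Proof.
  intros Hp. revert n. induction m as [|m IH]; intros n; [apply wprod_ge1; exact Hp|].
  destruct n as [|n].
  - rewrite zrep_succ, sum_n_m_empty by lia. pose proof (wprod_ge1 p 0 Hp). lra.
  - rewrite zrep_succ, <- (wprod_fixpoint p (S n)) by lia. apply sum_n_m_le_loc. intros j Hj.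
    apply Rmult_le_compat_l; [apply inv_pow_nonneg|apply IH].
Qed.

Lemma zrep_le_succ p m n : (1 <= n)%nat -> zrep p m n <= zrep p (S m) n.
Proof.
  revert n. induction m as [|m IH]; intros n Hn.
  - rewrite zrep_succ, (sum_n_m_succ_l _ 1 n), zrep_one by lia. simpl. rewrite pow1, Rinv_1.
    assert (0 <= sum_n_m (fun j => / (INR j ^ p) * zrep p 0 j) 2 n).
    { apply sum_n_m_nonneg_loc. intros. apply Rmult_le_pos; [apply inv_pow_nonneg|apply zrep_nonneg]. }
    change (zrep p 0 n) with 1. lra.
  - rewrite (zrep_succ p (S m)), zrep_succ. apply sum_n_m_le_loc. intros j Hj.
    apply Rmult_le_compat_l; [apply inv_pow_nonneg|apply IH; lia].
Qed.

(* The limit [A] exists by monotonicity; passing to the limit in the recursion at the top index gives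
   [A = W(n) + A/(n+1)^p], which also characterizes [W(n+1)]. *)
Lemma is_lim_seq_zrep p n : (1 <= p)%nat -> (1 <= n)%nat ->
  is_lim_seq (fun m => zrep p m n) (wprod p n).
Proof.
  intros Hp. induction n as [|[|n] IH]; intros Hn; [lia| |].
  - apply (is_lim_seq_ext (fun _ => 1)); [intros m; now rewrite zrep_one|apply is_lim_seq_const].
  - specialize (IH ltac:(lia)).
    set (u := fun m => zrep p m (S (S n))).
    set (A := real (Lim_seq u)).
    assert (HA : is_lim_seq u A).
    { apply (is_lim_seq_real_Lim_seq_incr u (wprod p (S (S n)))).
      - intros m. apply zrep_le_succ. lia.
      - intros m. now apply zrep_le_wprod. }
    set (x := / (INR (S (S n)) ^ p)).
    assert (Hrec : forall m, u (S m) = zrep p (S m) (S n) + x * u m).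
    { intros m. unfold u. rewrite !zrep_succ, (sum_n_m_succ_r _ 1 (S n)) by lia. reflexivity. }
    assert (HA' : is_lim_seq (fun m => u (S m)) (wprod p (S n) + x * A)).
    { apply (is_lim_seq_ext (fun m => zrep p (S m) (S n) + x * u m)); [intros m; now rewrite Hrec|].
      apply is_lim_seq_plus'.
      - exact (proj1 (is_lim_seq_incr_1 (fun m => zrep p m (S n)) (wprod p (S n))) IH).
      - apply (is_lim_seq_scal_l u x A HA). }
    assert (EA : A = wprod p (S n) + x * A).
    { apply Rbar_finite_eq. rewrite <- (is_lim_seq_unique _ _ HA'),
        <- (is_lim_seq_unique _ _ (proj1 (is_lim_seq_incr_1 u A) HA)). reflexivity. }
    pose proof (wprod_succ p (S n) Hp ltac:(lia)) as EW. fold x in EW.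
    assert (Hx : x < 1).
    { unfold x. rewrite <- Rinv_1. apply Rinv_lt_contravar; [|exact (pow_INR_SS_gt1 p n Hp)].
      pose proof (pow_INR_SS_gt1 p n Hp). lra. }
    assert (Hzero : (A - wprod p (S (S n))) * (1 - x) = 0) by nra.
    apply Rmult_integral in Hzero.
    replace (wprod p (S (S n))) with A by (destruct Hzero; lra). exact HA.
Qed.

Lemma is_lim_seq_nsum_split_last K w M : K <> nil -> (forall n, 0 <= w n) ->
  (forall N, nsum K 1 w N <= M) ->
  is_lim_seq (nsum K 1 w)
    (real (Lim_seq (nsum (removelast K) 1 (fun _ => w 1%nat))) + real (Lim_seq (nsum K 2 w))).
Proof.
  intros HK Hw HM.
  set (A := nsum (removelast K) 1 (fun _ => w 1%nat)).
  set (B := nsum K 2 w).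
  assert (Hsplit : forall N, nsum K 1 w (S N) = A (S N) + B (S N)).
  { intros N. apply nsum_split_last; [exact HK|lia]. }
  assert (HA0 : forall N, 0 <= A N) by (intros; apply nsum_nonneg; auto).
  assert (HB0 : forall N, 0 <= B N) by (intros; apply nsum_nonneg; auto).
  assert (HA_incr : forall N, A N <= A (S N)).
  { intros N. unfold A. destruct (removelast K) as [|k K'] eqn:E; [simpl; lra|].
    apply nsum_le_succ; [discriminate|auto]. }
  assert (HB_incr : forall N, B N <= B (S N)) by (intros; apply nsum_le_succ; auto).
  assert (HA : is_lim_seq A (real (Lim_seq A))).
  { apply (is_lim_seq_real_Lim_seq_incr A M HA_incr). intros N.
    specialize (Hsplit N). specialize (HM (S N)). specialize (HA_incr N). specialize (HB0 (S N)). lra. }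
  assert (HB : is_lim_seq B (real (Lim_seq B))).
  { apply (is_lim_seq_real_Lim_seq_incr B M HB_incr). intros N.
    specialize (Hsplit N). specialize (HM (S N)). specialize (HB_incr N). specialize (HA0 (S N)). lra. }
  apply (is_lim_seq_incr_1 (nsum K 1 w)).
  apply (is_lim_seq_ext (fun N => A (S N) + B (S N))); [intros N; now rewrite Hsplit|].
  apply is_lim_seq_plus'; [apply (is_lim_seq_incr_1 A)|apply (is_lim_seq_incr_1 B)]; assumption.
Qed.

Theorem proposition6p1 (k1 : nat) (ks : list nat) (p : nat) :
  (2 <= k1)%nat -> List.Forall (fun k => (1 <= k)%nat) ks -> (2 <= p)%nat ->
  is_lim_seq (fun m : nat => zeta_star (app (k1 :: ks) (List.repeat p m)))
    (Finite (zeta_star (removelast (k1 :: ks)) + rhs_sum (k1 :: ks) p)).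
Proof.
  intros Hk1 Hks Hp.
  assert (HK : k1 :: ks <> nil) by discriminate.
  assert (HW : forall n, 0 <= wprod p n <= 2).
  { intros n. pose proof (wprod_ge1 p n ltac:(lia)). pose proof (wprod_le2 p n Hp). lra. }
  apply (is_lim_seq_ext (fun m => real (Lim_seq (nsum (k1 :: ks) 1 (zrep p m))))).
  { intros m. unfold zeta_star. f_equal. apply Lim_seq_ext. intros N. now rewrite nsum_app. }
  apply (is_lim_seq_Lim_seq_incr2 _ (nsum (k1 :: ks) 1 (wprod p))).
  - intros m N. apply nsum_le_nsum; [exact HK|]. intros n Hn. now apply zrep_le_succ.
  - intros m N. apply nsum_le_succ; [exact HK|]. intros n. apply zrep_nonneg.
  - intros N. apply is_lim_seq_nsum; [exact HK|]. intros n Hn. apply is_lim_seq_zrep; lia.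
  - exact (is_lim_seq_nsum_split_last (k1 :: ks) (wprod p) _ HK (fun n => proj1 (HW n))
             (fun N => nsum_le_of_bounded_weight k1 ks (wprod p) 2 N Hk1 Hks HW)).
Qed.
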